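(* For a nonnegative integer $q$ let $\wp(q)=\int_0^{\frac{\pi}{2}}z\sin^qz\,\mathrm{d}z$. Then for every nonnegative integer $n$, $$\wp(2n)=\frac{\binom{2n}{n}}{4^{n+1}}\left(\frac{\pi^2}{2}+\sum_{k=1}^n\frac{4^k}{k^2\binom{2k}{k}}\right),\qquad \wp(2n+1)=\frac{4^n}{(2n+1)\binom{2n}{n}}\left(1+\sum_{k=1}^n\frac{\binom{2k}{k}}{4^k(2k+1)}\right).$$ *)

From Stdlib Require Import Reals.
From Coquelicot Require Import Coquelicot.
Open Scope R_scope.

Definition wp (q : nat) : R := RInt (fun z => z * (sin z) ^ q) 0 (PI / 2).

Definition cbin (k : nat) : R := Binomial.C (2 * k) k.

From Stdlib Require Import Reals Lra Lia.
From Coquelicot Require Import Coquelicot.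
Open Scope R_scope.

(* Integrating the derivative of
   [G q z = - z sin^(q+1) z cos z + sin^(q+2) z / (q+2)] over [0, pi/2] gives the
   reduction formula (q+2) wp(q+2) - (q+1) wp(q) = 1/(q+2), and wp(0) = pi^2/8,
   wp(1) = 1.  Since binom(2n+2,n+1) = binom(2n,n) 2(2n+1)/(n+1), both closed
   forms satisfy this recurrence (with step 2) and the same initial values. *)

Lemma ex_derive_continuous_R (f : R -> R) (x : R) :
  ex_derive f x -> continuous f x.
Proof.
  exact (ex_derive_continuous (K := R_AbsRing) (V := R_NormedModule) f x).
Qed.

Lemma RInt_is_derive (f F : R -> R) (a b : R) :
  (forall x, is_derive F x (f x)) -> (forall x, ex_derive f x) ->
  RInt f a b = F b - F a.
Proof.
  intros HF Hf. apply is_RInt_unique, (is_RInt_derive F f).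
  - intros x _. apply HF.
  - intros x _. apply ex_derive_continuous_R, Hf.
Qed.

Lemma ex_RInt_wp (q : nat) : ex_RInt (fun z => z * sin z ^ q) 0 (PI / 2).
Proof.
  apply (ex_RInt_continuous (V := R_CompleteNormedModule)). intros x _.
  apply ex_derive_continuous_R. auto_derive. auto.
Qed.

Lemma wp0 : wp 0 = PI ^ 2 / 8.
Proof.
  unfold wp. rewrite (RInt_is_derive _ (fun x => x ^ 2 / 2)).
  - field.
  - intro x. auto_derive; auto. simpl. field.
  - intro x. auto_derive. auto.
Qed.

Lemma wp1 : wp 1 = 1.
Proof.
  unfold wp. rewrite (RInt_is_derive _ (fun x => - x * cos x + sin x)).
  - rewrite sin_PI2, cos_PI2, sin_0, cos_0. field.
  - intro x. auto_derive; auto. simpl. field.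
  - intro x. auto_derive. auto.
Qed.

Definition wp_reduction_primitive (q : nat) (z : R) : R :=
  - z * sin z ^ (q + 1) * cos z + sin z ^ (q + 2) / INR (q + 2).

Lemma is_derive_wp_reduction_primitive (q : nat) (z : R) :
  is_derive (wp_reduction_primitive q) z
    (INR (q + 2) * (z * sin z ^ (q + 2)) - INR (q + 1) * (z * sin z ^ q)).
Proof.
  unfold wp_reduction_primitive. auto_derive; auto.
  replace (q + 1)%nat with (S q) by lia. replace (q + 2)%nat with (S (S q)) by lia.
  simpl pred. rewrite !S_INR. simpl pow.
  assert (Hq : INR q + 1 + 1 <> 0) by (pose proof (pos_INR q); lra).
  pose proof (sin2_cos2 z) as Hpyth. unfold Rsqr in Hpyth.
  set (s := sin z) in *. set (c := cos z) in *. set (P := s ^ q).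
  apply Rminus_diag_uniq.
  transitivity (- z * (INR q + 1) * P * (s * s + c * c - 1)).
  - field. exact Hq.
  - rewrite Hpyth. ring.
Qed.

Lemma wp_reduction (q : nat) :
  INR (q + 2) * wp (q + 2) - INR (q + 1) * wp q = / INR (q + 2).
Proof.
  assert (Hint : RInt (fun z => INR (q + 2) * (z * sin z ^ (q + 2))
                                 - INR (q + 1) * (z * sin z ^ q)) 0 (PI / 2)
                  = INR (q + 2) * wp (q + 2) - INR (q + 1) * wp q).
  { apply is_RInt_unique, (is_RInt_minus (V := R_NormedModule));
      unfold wp; apply (is_RInt_scal (V := R_NormedModule)),
      (RInt_correct (V := R_CompleteNormedModule)), ex_RInt_wp. }
  rewrite <- Hint, (RInt_is_derive _ (wp_reduction_primitive q)).
  - unfold wp_reduction_primitive.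
    rewrite sin_PI2, cos_PI2, sin_0, !pow1, !pow_i by lia.
    field. apply not_0_INR. lia.
  - apply is_derive_wp_reduction_primitive.
  - intro x. auto_derive. auto.
Qed.

Lemma wp_add2 (q : nat) : wp (q + 2) = (INR (q + 1) * wp q + / INR (q + 2)) / INR (q + 2).
Proof.
  assert (Hq : INR (q + 2) <> 0) by (apply not_0_INR; lia).
  apply (Rmult_eq_reg_l (INR (q + 2))); [| exact Hq].
  rewrite <- (wp_reduction q). field. exact Hq.
Qed.

Lemma cbin_gt0 (n : nat) : 0 < cbin n.
Proof.
  unfold cbin, Binomial.C. apply Rdiv_lt_0_compat.
  - apply INR_fact_lt_0.
  - apply Rmult_lt_0_compat; apply INR_fact_lt_0.
Qed.

Lemma cbinS (n : nat) : cbin (S n) = cbin n * (2 * (2 * INR n + 1) / (INR n + 1)).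
Proof.
  unfold cbin, Binomial.C.
  replace (2 * S n - S n)%nat with (S n) by lia.
  replace (2 * n - n)%nat with n by lia.
  replace (2 * S n)%nat with (S (S (2 * n))) by lia.
  rewrite !fact_simpl, !mult_INR, !S_INR, mult_INR. simpl (INR 2).
  pose proof (INR_fact_lt_0 n). pose proof (INR_fact_lt_0 (2 * n)).
  pose proof (pos_INR n).
  field. repeat split; lra.
Qed.

(* [sum_n_Sm] needs [1 <= n], which fails for the empty sum at [n = 0]. *)
Lemma sum_n_m_1_Sr (f : nat -> R) (n : nat) :
  sum_n_m f 1 (S n) = sum_n_m f 1 n + f (S n).
Proof.
  destruct n as [|n].
  - rewrite sum_n_n, sum_n_m_zero by lia. unfold zero. simpl. ring.
  - rewrite sum_n_Sm by lia. reflexivity.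
Qed.

Lemma wp_even (n : nat) :
  wp (2 * n) =
    cbin n / 4 ^ (n + 1) *
    (PI ^ 2 / 2 + sum_n_m (fun k => 4 ^ k / (INR k ^ 2 * cbin k)) 1 n).
Proof.
  induction n as [|n IH].
  - rewrite sum_n_m_zero by lia. unfold zero, cbin, Binomial.C. simpl.
    rewrite wp0. field.
  - pose proof (cbin_gt0 n). pose proof (pos_INR n).
    assert (H4n : 0 < 4 ^ n) by (apply pow_lt; lra).
    replace (2 * S n)%nat with (2 * n + 2)%nat by lia.
    rewrite sum_n_m_1_Sr, wp_add2, IH, !cbinS.
    replace (S n + 1)%nat with (S (S n)) by lia.
    replace (2 * n + 2)%nat with (S (S (2 * n))) by lia.
    replace (2 * n + 1)%nat with (S (2 * n)) by lia.
    replace (n + 1)%nat with (S n) by lia.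
    rewrite !S_INR, !mult_INR. simpl pow. simpl (INR 2).
    field. repeat split; lra.
Qed.

Lemma wp_odd (n : nat) :
  wp (2 * n + 1) =
    4 ^ n / (INR (2 * n + 1) * cbin n) *
    (1 + sum_n_m (fun k => cbin k / (4 ^ k * INR (2 * k + 1))) 1 n).
Proof.
  induction n as [|n IH].
  - rewrite sum_n_m_zero by lia. unfold zero, cbin, Binomial.C. simpl.
    rewrite wp1. field.
  - pose proof (cbin_gt0 n). pose proof (pos_INR n).
    assert (H4n : 0 < 4 ^ n) by (apply pow_lt; lra).
    replace (2 * S n + 1)%nat with (2 * n + 1 + 2)%nat by lia.
    rewrite sum_n_m_1_Sr, wp_add2, IH, !cbinS.
    replace (2 * n + 1 + 2)%nat with (S (S (S (2 * n)))) by lia.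
    replace (2 * n + 1 + 1)%nat with (S (S (2 * n))) by lia.
    replace (2 * S n + 1)%nat with (S (S (S (2 * n)))) by lia.
    replace (2 * n + 1)%nat with (S (2 * n)) by lia.
    rewrite !S_INR, !mult_INR. simpl pow. simpl (INR 2).
    field. repeat split; lra.
Qed.

Theorem lemma5p0p2 (n : nat) :
  wp (2 * n) =
    cbin n / 4 ^ (n + 1) *
    (PI ^ 2 / 2 +
     sum_n_m (fun k => 4 ^ k / (INR k ^ 2 * cbin k)) 1 n)
  /\
  wp (2 * n + 1) =
    4 ^ n / (INR (2 * n + 1) * cbin n) *
    (1 + sum_n_m (fun k => cbin k / (4 ^ k * INR (2 * k + 1))) 1 n).
Proof.
  split; [apply wp_even | apply wp_odd].
Qed.
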